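(* Let $q$ be a prime power with $q\equiv1\pmod4$. The Paley sum graph $X_\Sigma(q)$ is a Ramanujan graph. Moreover, if $q=p^{2k}$ with $p$ prime and $\sigma:\mathbb F_q\to\mathbb F_q$ is the automorphism $x\mapsto x^{p^k}$, then the twisted Paley graph $X(q)^\sigma$ and the twisted Paley sum graph $X_\Sigma(q)^\sigma$ are Ramanujan graphs.
   Context: Let $Q=\{x^2:x\in\mathbb F_q^*\}$ be the set of nonzero squares in $\mathbb F_q$. All graphs have vertex set $\mathbb F_q$ and, for each $s\in Q$: the Paley sum graph $X_\Sigma(q)$ has an edge from $x$ to $-x+s$; the twisted Paley graph $X(q)^\sigma$ has an edge from $x$ to $\sigma(x+s)$; the twisted Paley sum graph $X_\Sigma(q)^\sigma$ has an edge from $x$ to $\sigma(-x+s)$. A $k$-regular undirected graph is Ramanujan if every eigenvalue $\lambda$ of its adjacency matrix with $|\lambda|\ne k$ satisfies $|\lambda|\le2\sqrt{k-1}$. *)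

From HB Require Import structures.
From mathcomp Require Import all_boot all_order all_algebra all_field.
Set Implicit Arguments. Unset Strict Implicit. Unset Printing Implicit Defensive.
Import Order.TTheory GRing.Theory Num.Theory.
Local Open Scope ring_scope.

Definition nzsquares (F : finFieldType) : {set F} :=
  [set y | [exists x : F, (x != 0) && (y == x ^+ 2)]].

Definition adjmx (F : finFieldType) (f : F -> F -> F) : 'M[algC]_#|F| :=
  \matrix_(i, j) (if [exists s in nzsquares F, enum_val j == f (enum_val i) s]
                  then 1 else 0).

Definition paley_sum_adj (F : finFieldType) : 'M[algC]_#|F| :=
  adjmx (fun x s : F => - x + s).
Definition twisted_paley_adj (F : finFieldType) (sigma : F -> F) : 'M[algC]_#|F| :=
  adjmx (fun x s : F => sigma (x + s)).
Definition twisted_paley_sum_adj (F : finFieldType) (sigma : F -> F) : 'M[algC]_#|F| :=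
  adjmx (fun x s : F => sigma (- x + s)).

Definition ramanujan (n : nat) (A : 'M[algC]_n) : Prop :=
  exists k : nat,
    [/\ A^T = A,
        (forall i, \sum_j A i j = k%:R) &
        (forall lambda : algC, eigenvalue A lambda ->
           `|lambda| != k%:R -> `|lambda| <= 2 * sqrtC (k.-1)%:R)].

From HB Require Import structures.
From mathcomp Require Import all_boot all_order all_algebra all_field.
From mathcomp Require Import zify ring.

(* Each graph has an edge x -> y iff phi y + e x is a nonzero square, where
   phi is an additive involution preserving squares (the identity or the
   Frobenius power sigma) and e = 1 or -1.  Let chi be the quadratic
   character, J the all-ones matrix, T = [chi (phi y + e x)],
   P = [phi y + e x = 0] (a permutation matrix) and S = [chi (y - x)] (the
   Jacobsthal matrix); then the adjacency matrix is A = (T + J - P) / 2.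
   The autocorrelation sum_u chi u chi (u + d) = -1 (d <> 0) gives
   T^2 = S^2 = q - J, and P^2 = 1, TP = PT = S since chi (-1) = 1 for
   q = 1 mod 4.  An eigenvector of A for an eigenvalue l other than the
   degree k = (q - 1) / 2 is killed by J, hence is an eigenvector of T - P for
   2 l and of S for nu = (q + 1 - 4 l^2) / 2, where nu^2 = q.  Therefore
   |2 l| <= sqrt q + 1 <= 4 sqrt (k - 1). *)

Set Implicit Arguments. Unset Strict Implicit. Unset Printing Implicit Defensive.
Import Order.TTheory GRing.Theory Num.Theory.
Local Open Scope ring_scope.

Lemma sum_delta (T : finType) (R : pzSemiRingType) (f : T -> R) (a : T) :
  \sum_y (y == a)%:R * f y = f a.
Proof.
rewrite (bigD1 a) //= eqxx mul1r big1 ?addr0 // => y /negbTE->.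
by rewrite mul0r.
Qed.

Section QuadraticCharacter.

Variable F : finFieldType.

Local Notation Q := (nzsquares F).

Definition qchar (x : F) : algC :=
  if x == 0 then 0 else if x \in Q then 1 else -1.

Lemma nzsquares_neq0 (x : F) : x \in Q -> x != 0.
Proof. by rewrite inE => /existsP [r /andP [r0 /eqP ->]]; rewrite sqrf_eq0. Qed.

Lemma sqr_nzsquares (x : F) : x != 0 -> x ^+ 2 \in Q.
Proof. by move=> x0; rewrite inE; apply/existsP; exists x; rewrite x0 eqxx. Qed.

Lemma nzsquares0 : (0 : F) \notin Q.
Proof. by apply/negP => /nzsquares_neq0/eqP. Qed.

Lemma qchar0 : qchar 0 = 0.
Proof. by rewrite /qchar eqxx. Qed.

Lemma qchar_eq1 (x : F) : (qchar x == 1) = (x \in Q).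
Proof.
rewrite /qchar; have [->|x0] := eqVneq x 0.
  by rewrite eq_sym oner_eq0 (negbTE nzsquares0).
by case: (x \in Q); rewrite ?eqxx // eqNr oner_eq0.
Qed.

Lemma qchar1 : qchar 1 = 1.
Proof. by apply/eqP; rewrite qchar_eq1 -(expr1n _ 2) sqr_nzsquares ?oner_eq0. Qed.

Lemma natr_nzsquares (x : F) : (x \in Q)%:R *+ 2 = qchar x + 1 - (x == 0)%:R :> algC.
Proof.
rewrite /qchar; have [->|x0] := eqVneq x 0.
  by rewrite (negbTE nzsquares0) /= add0r subrr mul0rn.
by case: (x \in Q); rewrite /= subr0 ?addNr ?mul0rn.
Qed.

Hypothesis oddF : odd #|F|.

Local Notation m := #|F|./2.

Lemma card_F_half : #|F| = m.*2.+1.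
Proof. by rewrite -{1}(odd_double_half #|F|) oddF. Qed.

Lemma half_card_gt0 : (0 < m)%N.
Proof. by have := finNzRing_gt1 F; rewrite card_F_half; case: m. Qed.

Lemma expf_half_sqr (x : F) : x != 0 -> (x ^+ m) ^+ 2 = 1.
Proof.
move=> x0; apply: (mulIf x0).
by rewrite mul1r -exprM -exprSr muln2 -card_F_half expf_card.
Qed.

Lemma card_half_roots : (#|[set x : F | x ^+ m == 1%R]| <= m)%N.
Proof.
rewrite cardE; apply: max_unity_roots half_card_gt0 _ (enum_uniq _).
by apply/allP => x; rewrite mem_enum inE unity_rootE.
Qed.

(* Squaring is at most two-to-one on the 2m nonzero elements. *)
Lemma half_card_le_nzsquares : (m <= #|Q|)%N.
Proof.
rewrite -leq_double.
have -> : (m.*2 = #|predC1 (0%R : F)|)%N by rewrite cardC1 [in RHS]card_F_half.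
rewrite -[X in (X <= _)%N]sum1_card (partition_big (fun x : F => x ^+ 2) (mem Q)) /=; last first.
  exact: sqr_nzsquares.
rewrite -mul2n mulnC -sum_nat_const; apply: leq_sum => _ /[1!inE] /existsP [r /andP [_ /eqP ->]].
rewrite sum1_card (@leq_trans #|[set r; - r]|) //; last by rewrite cards2; case: (_ != _).
by apply/subset_leq_card/subsetP => x /andP [_]; rewrite !inE eqf_sqr.
Qed.

Lemma nzsquaresE (x : F) : (x \in Q) = (x != 0) && (x ^+ m == 1).
Proof.
set R := [set x : F | (x != 0) && (x ^+ m == 1)].
have sQR : Q \subset R.
  apply/subsetP => y yQ; rewrite inE (nzsquares_neq0 yQ) /=.
  by move: yQ; rewrite inE => /existsP [r /andP [r0 /eqP ->]]; rewrite exprAC expf_half_sqr.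
have leRQ : (#|R| <= #|Q|)%N.
  apply: leq_trans (leq_trans _ card_half_roots) half_card_le_nzsquares.
  by apply/subset_leq_card/subsetP => y; rewrite !inE => /andP [].
have /eqP -> : Q == R by rewrite eqEcard sQR.
by rewrite inE.
Qed.

Lemma card_nzsquares : #|Q| = m.
Proof.
apply/eqP; rewrite eqn_leq half_card_le_nzsquares andbT.
apply: leq_trans card_half_roots; apply/subset_leq_card/subsetP => x.
by rewrite nzsquaresE inE => /andP [].
Qed.

Lemma exists_nonsquare : exists2 g : F, g != 0 & g \notin Q.
Proof.
have [g /andP [g0 gQ] | allQ] := pickP [pred g : F | (g != 0) && (g \notin Q)].
  by exists g.
have : (#|predC1 (0%R : F)| <= #|Q|)%N.
  apply/subset_leq_card/subsetP => g; rewrite inE => g0.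
  by move: (allQ g); rewrite /= g0 => /negbFE.
by rewrite cardC1 [in X in (X <= _)%N]card_F_half card_nzsquares; have := half_card_gt0; lia.
Qed.

Lemma expf_half_pm1 (x : F) : x != 0 -> x ^+ m = 1 \/ x ^+ m = -1.
Proof. by move/expf_half_sqr/eqP; rewrite sqrf_eq1 => /orP [] /eqP; [left | right]. Qed.

Lemma oppr1_neq1 : (-1 : F) != 1.
Proof.
have [g g0] := exists_nonsquare; rewrite nzsquaresE g0 /=.
by case: (expf_half_pm1 g0) => ->; rewrite ?eqxx.
Qed.

Lemma qchar_euler (x : F) : x != 0 -> qchar x = if x ^+ m == 1 then 1 else -1.
Proof. by move=> x0; rewrite /qchar nzsquaresE (negbTE x0). Qed.

Lemma qcharM : {morph qchar : x y / x * y}.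
Proof.
move=> x y; have [->|x0] := eqVneq x 0; first by rewrite mul0r qchar0 mul0r.
have [->|y0] := eqVneq y 0; first by rewrite mulr0 qchar0 mulr0.
rewrite !qchar_euler ?mulf_neq0 // exprMn.
have N1 := negbTE oppr1_neq1.
by case: (expf_half_pm1 x0) => ->; case: (expf_half_pm1 y0) => ->;
  rewrite ?(mulr1, mul1r, mulrNN, eqxx, N1).
Qed.

Lemma qchar_sqr (x : F) : x != 0 -> qchar (x ^+ 2) = 1.
Proof. by move=> x0; apply/eqP; rewrite qchar_eq1 sqr_nzsquares. Qed.

Lemma sum_qchar : \sum_x qchar x = 0.
Proof.
have [g g0 gQ] := exists_nonsquare.
have qg : qchar g = -1 by rewrite /qchar (negbTE g0) (negbTE gQ).
have : \sum_x qchar x = - \sum_x qchar x.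
  rewrite {1}(reindex_inj (mulfI g0)) /= -sumrN.
  by apply: eq_bigr => x _; rewrite qcharM qg mulN1r.
by move/eqP; rewrite -addr_eq0 -mulr2n mulrn_eq0 /= => /eqP.
Qed.

(* For u != 0, u (u + d) = u^2 (1 + d / u), and u |-> 1 + d / u is injective. *)
Lemma qchar_autocorr (d : F) :
  \sum_u qchar u * qchar (u + d) = #|F|%:R * (d == 0)%:R - 1.
Proof.
have [->|d0] := eqVneq d 0.
  rewrite (bigD1 0) //= qchar0 mul0r add0r.
  under eq_bigr => u u0 do rewrite addr0 -qcharM -expr2 qchar_sqr //.
  by rewrite sumr_const cardC1 card_F_half /= mulr1 -natr1 addrK.
have shift u : qchar u * qchar (u + d) = qchar (1 + d / u) - (u == 0)%:R.
  have [->|u0] := eqVneq u 0; first by rewrite qchar0 mul0r invr0 mulr0 addr0 qchar1 subrr.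
  have -> : u + d = u * (1 + d / u) by rewrite mulrDr mulr1 mulrCA mulfV ?mulr1.
  by rewrite /= subr0 -qcharM mulrA -expr2 qcharM qchar_sqr ?mul1r.
have inj_shift : injective (fun u : F => 1 + d / u).
  by move=> u v /addrI /(mulfI d0) /invr_inj.
under eq_bigr do rewrite shift.
rewrite sumrB; have -> : \sum_u qchar (1 + d / u) = 0.
  by have := sum_qchar; rewrite (reindex_inj inj_shift).
rewrite (bigD1 0) //= eqxx mulr0 big1 ?addr0 ?sub0r //.
by move=> u /negbTE ->.
Qed.

End QuadraticCharacter.

Definition kmx (T : finType) (R : Type) (f : T -> T -> R) : 'M[R]_#|T| :=
  \matrix_(i, j) f (enum_val i) (enum_val j).

Section KernelMatrices.

Variables (T : finType) (R : pzRingType).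
Implicit Types f g : T -> T -> R.

Lemma sum_enum_val (h : T -> R) : \sum_(i < #|T|) h (enum_val i) = \sum_x h x.
Proof. by rewrite -(big_enum_val (A := predT)). Qed.

Lemma kmx_row_sum f i : \sum_j kmx f i j = \sum_y f (enum_val i) y.
Proof. by under eq_bigr do rewrite mxE; rewrite sum_enum_val. Qed.

Lemma mul_kmx f g : kmx f *m kmx g = kmx (fun x z => \sum_y f x y * g y z).
Proof.
apply/matrixP => i j; rewrite !mxE; under eq_bigr do rewrite !mxE.
exact: (sum_enum_val (fun y => f (enum_val i) y * g y (enum_val j))).
Qed.

Lemma eq_kmx f g : (forall x y, f x y = g x y) -> kmx f = kmx g.
Proof. by move=> fg; apply/matrixP => i j; rewrite !mxE fg. Qed.

Lemma trmx_kmx f : (kmx f)^T = kmx (fun x y => f y x).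
Proof. by apply/matrixP => i j; rewrite !mxE. Qed.

Lemma kmx_delta : kmx (fun x y : T => (x == y)%:R) = 1%:M :> 'M[R]_#|T|.
Proof. by apply/matrixP => i j; rewrite !mxE (inj_eq enum_val_inj). Qed.

Lemma kmx_scalar_sub_const (q : R) :
  kmx (fun x y : T => q * (x == y)%:R - 1) = q%:M - const_mx 1.
Proof. by apply/matrixP => i j; rewrite !mxE (inj_eq enum_val_inj) mulr_natr. Qed.

End KernelMatrices.

Lemma adjmx_kmx (F : finFieldType) (f g : F -> F -> F) :
    (forall x y s, (y == f x s) = (s == g x y)) ->
  adjmx f = kmx (fun x y => (g x y \in nzsquares F)%:R).
Proof.
move=> fg; apply/matrixP => i j; rewrite !mxE.
set y := enum_val j; set x := enum_val i.
have -> : [exists s in nzsquares F, y == f x s] = (g x y \in nzsquares F).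
  by apply/exists_inP/idP => [[s sQ /[!fg] /eqP <-] | gQ] //; exists (g x y); rewrite ?fg.
by case: (_ \in _).
Qed.

Section EigenvalueRelation.

Variables (R : numFieldType) (n : nat) (q k : R) (A T P S : 'M[R]_n).
Local Notation J := (const_mx 1 : 'M[R]_n).
Hypotheses (rowsumA : forall i, \sum_j A i j = k) (A2 : A *+ 2 = T + J - P)
  (TT : T *m T = q%:M - J) (PP : P *m P = 1%:M) (TP : T *m P = S)
  (PT : P *m T = S) (SS : S *m S = q%:M - J).

Lemma mulmx_const1 : A *m J = k *: J.
Proof.
apply/matrixP => i j; rewrite !mxE -(rowsumA i) mulr1.
by under eq_bigr do rewrite mxE mulr1.
Qed.

Lemma eigenvector_mulmx_const1 (v : 'rV[R]_n) l :
  v *m A = l *: v -> l != k -> v *m J = 0.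
Proof.
move=> vA lk; have : (l - k) *: (v *m J) = 0.
  by rewrite scalerBl scalemxAl -vA -mulmxA mulmx_const1 -scalemxAr subrr.
by move/eqP; rewrite scaler_eq0 subr_eq0 (negbTE lk) => /eqP.
Qed.

Lemma eigenvalue_relation l :
  eigenvalue A l -> l != k -> ((q + 1 - (l *+ 2) ^+ 2) / 2) ^+ 2 = q.
Proof.
move=> /eigenvalueP [v vA v0] lk; have vJ := eigenvector_mulmx_const1 vA lk.
have sqr_eigen (M : 'M[R]_n) a : v *m M = a *: v -> v *m (M *m M) = a ^+ 2 *: v.
  by move=> vM; rewrite mulmxA vM -scalemxAl vM scalerA -expr2.
have vTP : v *m (T - P) = (l *+ 2) *: v.
  rewrite (_ : T - P = A *+ 2 - J); last by rewrite A2 addrAC addrK.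
  by rewrite mulmxBr vJ subr0 mulr2n mulmxDr vA -scalerDl.
have TP2 : (T - P) *m (T - P) = (q + 1)%:M - J - S *+ 2.
  rewrite mulmxBl !mulmxBr TT TP PT PP.
  by apply/matrixP => i j; rewrite !mxE; ring.
set nu := (q + 1 - (l *+ 2) ^+ 2) / 2.
have vS : v *m S = nu *: v.
  have two0 : (2 : R) != 0 by rewrite pnatr_eq0.
  apply: (scalerI two0); rewrite scalerA mulrC divfK // scalerBl scaler_nat mulr2n.
  have := sqr_eigen _ _ vTP; rewrite TP2 !mulmxBr vJ subr0 mul_mx_scalar mulr2n mulmxDr.
  by move=> <-; rewrite opprB addrC subrK.
have := sqr_eigen _ _ vS; rewrite SS mulmxBr vJ subr0 mul_mx_scalar => /eqP.
by rewrite eq_sym -subr_eq0 -scalerBl scaler_eq0 (negbTE v0) orbF subr_eq0 => /eqP.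
Qed.

End EigenvalueRelation.

Lemma norm_le_of_sqr_relation (R : numFieldType) (r mu : R) : 0 <= r ->
  ((r ^+ 2 + 1 - mu ^+ 2) / 2) ^+ 2 = r ^+ 2 -> `|mu| <= r + 1.
Proof.
move=> r0; set X := (_ / 2).
have root_case s : s ^+ 2 = r ^+ 2 -> `|s| = r -> X = s -> `|mu| <= r + 1.
  move=> sr2 sr Xs.
  have twoX : r ^+ 2 + 1 - mu ^+ 2 = s * 2 by rewrite -Xs mulfVK ?pnatr_eq0.
  have /eqP : mu ^+ 2 = (s - 1) ^+ 2.
    have -> : mu ^+ 2 = r ^+ 2 + 1 - s * 2 by rewrite -twoX; ring.
    by rewrite -sr2; ring.
  rewrite eqf_sqr => /orP [] /eqP ->;
    by rewrite ?normrN -sr (le_trans (ler_normB _ _)) ?normr1.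
move/eqP; rewrite eqf_sqr => /orP [] /eqP.
  by apply: root_case => //; rewrite ger0_norm.
by apply: root_case; rewrite ?sqrrN ?normrN ?ger0_norm.
Qed.

Lemma norm_le_ramanujan (m : nat) (l : algC) : (2 <= m)%N ->
    (((m.*2.+1)%:R + 1 - (l *+ 2) ^+ 2) / 2) ^+ 2 = (m.*2.+1)%:R ->
  `|l| <= 2 * sqrtC (m.-1)%:R.
Proof.
move=> m2 rel; set r : algC := sqrtC (m.*2.+1)%:R; set t : algC := sqrtC (m.-1)%:R.
have r0 : 0 <= r by rewrite sqrtC_ge0 ler0n.
have t0 : 0 <= t by rewrite sqrtC_ge0 ler0n.
have r2 : r ^+ 2 = (m.*2.+1)%:R := sqrtCK _.
have l2 : `|l *+ 2| <= r + 1 by apply: norm_le_of_sqr_relation; rewrite // r2.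
have r_le : r <= (m.*2.+1)%:R.
  by rewrite -ler_sqr ?nnegrE ?ler0n // r2 -natrX ler_nat; nia.
have r1_le : r + 1 <= 4 * t.
  rewrite -ler_sqr ?nnegrE ?addr_ge0 ?mulr_ge0 ?ler0n // exprMn sqrtCK sqrrD1 r2.
  apply: (@le_trans _ _ ((m.*2.+1)%:R + (m.*2.+1)%:R *+ 2 + 1)).
    by rewrite lerD2r lerD2l lerMn2r r_le orbT.
  have -> : ((m.*2.+1)%:R + (m.*2.+1)%:R *+ 2 + 1 : algC) =
      (m.*2.+1 + m.*2.+1 * 2 + 1)%:R by rewrite !natrD natrM mulr_natr.
  by rewrite -natrX -natrM ler_nat; lia.
have : `|l| *+ 2 <= (2 * t) *+ 2.
  rewrite -normrMn (le_trans l2) // (le_trans r1_le) //.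
  by rewrite -mulrnAl -mulrnA.
by rewrite lerMn2r.
Qed.

Section TwistedPaley.

Variable F : finFieldType.
Hypothesis card_F_mod4 : (#|F| %% 4 = 1)%N.
Variables (phi : F -> F) (e : F).
Hypotheses (phiD : {morph phi : x y / x + y}) (phiK : involutive phi)
  (phiQ : {mono phi : x / x \in nzsquares F}) (e_sqr : e ^+ 2 = 1).
Implicit Types x y z u : F.

Local Notation Q := (nzsquares F).

Let oddF : odd #|F|. Proof. by move: card_F_mod4; lia. Qed.

Let qcharN1 : qchar (-1 : F) = 1.
Proof.
apply/eqP; rewrite qchar_eq1 nzsquaresE // oppr_eq0 oner_eq0 -signr_odd.
have -> : odd #|F|./2 = false by move: card_F_mod4; lia.
by rewrite eqxx.
Qed.

Let qcharN x : qchar (- x) = qchar x.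
Proof. by rewrite -mulN1r (qcharM oddF) qcharN1 mul1r. Qed.

Let e_pm1 : e = 1 \/ e = -1.
Proof. by move/eqP: e_sqr; rewrite sqrf_eq1 => /orP [] /eqP; [left | right]. Qed.

Let mul_ee x : e * (e * x) = x.
Proof. by rewrite mulrA -expr2 e_sqr mul1r. Qed.

Let qchar_mul_e x : qchar (e * x) = qchar x.
Proof. by case: e_pm1 => ->; rewrite ?mul1r ?mulN1r ?qcharN. Qed.

Let nzsquares_mul_e x : (e * x \in Q) = (x \in Q).
Proof. by rewrite -!qchar_eq1 qchar_mul_e. Qed.

Let e_neq0 : e != 0.
Proof. by case: e_pm1 => ->; rewrite ?oppr_eq0 oner_eq0. Qed.

Let phi0 : phi 0 = 0.
Proof. by apply: (addrI (phi 0)); rewrite -phiD !addr0. Qed.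

Let phiN x : phi (- x) = - phi x.
Proof. by apply: (addrI (phi x)); rewrite -phiD !subrr phi0. Qed.

Let phi_mul_e x : phi (e * x) = e * phi x.
Proof. by case: e_pm1 => ->; rewrite ?mul1r ?mulN1r ?phiN. Qed.

Let qchar_phi x : qchar (phi x) = qchar x.
Proof. by rewrite /qchar phiQ -{1}phi0 (can_eq phiK). Qed.

Definition twist x y := phi y + e * x.
Definition twisted_adj x y : algC := (twist x y \in Q)%:R.
Definition twisted_char x y := qchar (twist x y).
Definition twisted_perm x y : algC := (twist x y == 0)%:R.
Definition jacobsthal (x y : F) := qchar (y - x).

Let rho x := phi (- (e * x)).

Let rhoK : involutive rho.
Proof. by move=> x; rewrite /rho -phi_mul_e mulrN mul_ee phiN phiK opprK. Qed.

Let twisted_permE x y : twisted_perm x y = (y == rho x)%:R.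
Proof. by rewrite /twisted_perm /twist addr_eq0 (can2_eq phiK phiK). Qed.

Lemma twisted_adj_sym x y : twisted_adj x y = twisted_adj y x.
Proof.
rewrite /twisted_adj /twist -phiQ phiD phiK phi_mul_e -nzsquares_mul_e.
by rewrite mulrDr mul_ee addrC.
Qed.

Lemma twisted_adj_row_sum x : \sum_y twisted_adj x y = (#|F|./2)%:R.
Proof.
have twist_inj : injective (twist x) by move=> y z /addIr /(can_inj phiK).
rewrite -(card_nzsquares oddF) -sum1_card natr_sum [RHS]big_mkcond.
rewrite [RHS](reindex_inj twist_inj); apply: eq_bigr => y _.
by rewrite /twisted_adj; case: (_ \in _).
Qed.

Lemma twisted_adj_double x y :
  twisted_adj x y *+ 2 = twisted_char x y + 1 - twisted_perm x y.
Proof. exact: natr_nzsquares. Qed.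

Lemma twisted_char_mul x z :
  \sum_y twisted_char x y * twisted_char y z = #|F|%:R * (x == z)%:R - 1.
Proof.
have shift_inj : injective (fun u => phi (u - e * x)).
  by move=> u v /(can_inj phiK) /addIr.
have shift u : phi z + e * phi (u - e * x) = phi (e * (u + e * (z - x))).
  by rewrite -phi_mul_e -phiD mulrBr mulrDr !mul_ee; congr phi; ring.
rewrite (reindex_inj shift_inj) /=.
under eq_bigr do rewrite /twisted_char /twist phiK subrK shift qchar_phi qchar_mul_e.
by rewrite qchar_autocorr // mulf_eq0 (negbTE e_neq0) subr_eq0 eq_sym.
Qed.

Lemma twisted_char_perm x z :
  \sum_y twisted_char x y * twisted_perm y z = jacobsthal x z.
Proof.
under eq_bigr do rewrite twisted_permE eq_sym (can2_eq rhoK rhoK) mulrC.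
rewrite sum_delta /twisted_char /twist /rho phiK -mulrN -mulrDr qchar_mul_e.
by rewrite /jacobsthal -qcharN opprD opprK.
Qed.

Lemma twisted_perm_char x z :
  \sum_y twisted_perm x y * twisted_char y z = jacobsthal x z.
Proof.
under eq_bigr do rewrite twisted_permE.
by rewrite sum_delta /twisted_char /twist /rho -phi_mul_e mulrN mul_ee -phiD qchar_phi.
Qed.

Lemma twisted_perm_mul x z :
  \sum_y twisted_perm x y * twisted_perm y z = (x == z)%:R.
Proof.
under eq_bigr do rewrite twisted_permE.
by rewrite sum_delta twisted_permE rhoK eq_sym.
Qed.

Lemma jacobsthal_mul x z :
  \sum_y jacobsthal x y * jacobsthal y z = #|F|%:R * (x == z)%:R - 1.
Proof.
rewrite (reindex_inj (addIr x)) /jacobsthal /=.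
have shift u : z - (u + x) = - (u + (x - z)) by ring.
under eq_bigr do rewrite addrK shift qcharN.
by rewrite qchar_autocorr // subr_eq0.
Qed.

Lemma ramanujan_twisted_adj : ramanujan (kmx twisted_adj).
Proof.
have m2 : (2 <= #|F|./2)%N by move: (half_card_gt0 oddF) card_F_mod4; lia.
have mul_eq (f g : F -> F -> algC) h : (forall x z, \sum_y f x y * g y z = h x z) ->
    kmx f *m kmx g = kmx h.
  by move=> fg; rewrite mul_kmx; apply: eq_kmx.
have rowsum i : \sum_j kmx twisted_adj i j = (#|F|./2)%:R.
  by rewrite kmx_row_sum twisted_adj_row_sum.
have A2 : kmx twisted_adj *+ 2 = kmx twisted_char + const_mx 1 - kmx twisted_perm.
  by apply/matrixP => i j; rewrite !mxE -mulr2n twisted_adj_double.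
have TT := mul_eq _ _ _ twisted_char_mul; have SS := mul_eq _ _ _ jacobsthal_mul.
have PP := mul_eq _ _ _ twisted_perm_mul; rewrite kmx_delta in PP.
rewrite kmx_scalar_sub_const in TT SS.
exists #|F|./2; split => // [|l eig_l ln].
  by rewrite trmx_kmx; apply: eq_kmx => x y; rewrite twisted_adj_sym.
have lk : l != (#|F|./2)%:R by apply: contraNneq ln => ->; rewrite normr_nat.
have := eigenvalue_relation rowsum A2 TT PP (mul_eq _ _ _ twisted_char_perm)
  (mul_eq _ _ _ twisted_perm_char) SS eig_l lk.
by have := @norm_le_ramanujan _ l m2; rewrite -(card_F_half oddF); apply.
Qed.

End TwistedPaley.

Lemma nzsquares_expn (F : finFieldType) (n : nat) (x : F) :
  x \in nzsquares F -> x ^+ n \in nzsquares F.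
Proof.
rewrite !inE => /existsP [r /andP [r0 /eqP ->]]; apply/existsP; exists (r ^+ n).
by rewrite expf_neq0 // exprAC eqxx.
Qed.

Section FrobeniusInvolution.

Variables (F : finFieldType) (p k : nat).
Hypotheses (p_prime : prime p) (card_F : #|F| = (p ^ (2 * k))%N).

Local Notation sigma := (fun x : F => x ^+ (p ^ k)).

Lemma frobenius_pow_morphD : {morph sigma : x y / x + y}.
Proof.
have pchar_p : p \in [pchar F] := card_finPcharP card_F p_prime.
by move=> x y; rewrite exprDn_pchar // (eq_pnat _ (pcharf_eq pchar_p)) pnatX pnat_id.
Qed.

Lemma frobenius_pow_involutive : involutive sigma.
Proof. by move=> x; rewrite -exprM -expnD addnn -mul2n -card_F expf_card. Qed.

Lemma frobenius_pow_nzsquares : {mono sigma : x / x \in nzsquares F}.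
Proof.
move=> x; apply/idP/idP => [|/nzsquares_expn //].
by rewrite -{2}(frobenius_pow_involutive x) => /nzsquares_expn.
Qed.

End FrobeniusInvolution.

Theorem theorem5p4 (F : finFieldType) :
  (#|F| %% 4 = 1)%N ->
  ramanujan (paley_sum_adj F) /\
  (forall p k : nat, prime p -> #|F| = (p ^ (2 * k))%N ->
     let sigma := fun x : F => x ^+ (p ^ k) in
     ramanujan (twisted_paley_adj sigma) /\
     ramanujan (twisted_paley_sum_adj sigma)).
Proof.
move=> F4; split.
  rewrite /paley_sum_adj (adjmx_kmx (g := twist id 1)) => [|x y s].
    by apply: ramanujan_twisted_adj; rewrite ?expr1n.
  by rewrite /twist mul1r addrC eq_sym subr_eq.
move=> p k p_prime card_F sigma.
have sigmaD := frobenius_pow_morphD p_prime card_F.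
have sigmaK := frobenius_pow_involutive card_F.
have sigmaQ := frobenius_pow_nzsquares card_F.
split.
  rewrite /twisted_paley_adj (adjmx_kmx (g := twist sigma (-1))) => [|x y s].
    by apply: ramanujan_twisted_adj; rewrite ?sqrrN ?expr1n.
  by rewrite /twist mulN1r eq_sym (can2_eq sigmaK sigmaK) eq_sym [RHS]eq_sym subr_eq addrC.
rewrite /twisted_paley_sum_adj (adjmx_kmx (g := twist sigma 1)) => [|x y s].
  by apply: ramanujan_twisted_adj; rewrite ?expr1n.
by rewrite /twist mul1r eq_sym (can2_eq sigmaK sigmaK) addrC subr_eq.
Qed.
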